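(* Let $s,t$ be positive integers, $k,l$ nonnegative integers and $r$ a positive integer. Put $$a=\frac{l(s+t)+t}{s+t},\qquad b=\frac{k(s+t)+s}{s+t},$$ and define $$P(x)=\left(\frac{x-1}{2}\right)^{l(s+t)+t}\left(\frac{x+1}{2}\right)^{k(s+t)+s}J_{r-1}(a,b,x)^{s+t},\qquad Q(x)=J_{k+l+r}(-a,-b,x)^{s+t}.$$ Then $\deg(P-Q)\le m$, where $m=(k+l+r)(s+t-1)-r$.
   Context: For a nonnegative integer $N$ and complex parameters $\alpha,\beta$, the (generalized) Jacobi polynomial is $J_N(\alpha,\beta,x)=\sum_{j=0}^{N}\binom{N+\alpha+\beta+j}{j}\binom{N+\alpha}{N-j}\left(\frac{x-1}{2}\right)^j$, where $\binom{y}{j}=y(y-1)\cdots(y-j+1)/j!$ for arbitrary $y$. Here $a+b=k+l+1$. The polynomials $P,Q$ have degree $(s+t)(k+l+r)$, and $m$ is this degree minus $k+l+2r$; this is the Davenport–Zannier pair for the ''even double brush'' weighted tree (a chain with alternating edge weights $s,t$ and $r$ inner white vertices, with $k$ and $l$ leaves of weight $s+t$ attached at its two ends). *)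

From HB Require Import structures.
From mathcomp Require Import all_boot all_order all_algebra.
Set Implicit Arguments. Unset Strict Implicit. Unset Printing Implicit Defensive.
Import Order.TTheory GRing.Theory Num.Theory.
Local Open Scope ring_scope.

Definition gbinom (R : fieldType) (y : R) (j : nat) : R :=
  (\prod_(i < j) (y - i%:R)) / (j`!)%:R.

Definition xm1half (R : fieldType) : {poly R} := 2%:R^-1 *: ('X - 1).
Definition xp1half (R : fieldType) : {poly R} := 2%:R^-1 *: ('X + 1).

Definition jacobi (R : fieldType) (N : nat) (al be : R) : {poly R} :=
  \sum_(j < N.+1)
     (gbinom (N%:R + al + be + j%:R) j * gbinom (N%:R + al) (N - j)%N)
       *: xm1half R ^+ j.

From HB Require Import structures.
From mathcomp Require Import all_boot all_order all_algebra.
From mathcomp Require Import ring zify.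
Set Implicit Arguments. Unset Strict Implicit. Unset Printing Implicit Defensive.
Import Order.TTheory GRing.Theory Num.Theory.
Local Open Scope ring_scope.

(* After the substitution u = (x - 1)/2, P = u^e1 (u + 1)^e2 h^n and Q = g^n, where
   n = s + t, e1 = n a, e2 = n b, N = k + l + r, and h = J_(r-1)(a, b), g = J_N(-a, -b)
   are read as polynomials in u.  Since h and g solve the Jacobi equations with parameters
   (a, b) and (-a, -b), and a + b + (r-1)(r+a+b) = N(N-a-b+1), the polynomial
   W = (a (u+1) + b u) h g + u (u+1) (g h' - g' h) is constant; therefore
   P' Q - P Q' = n u^(e1-1) (u+1)^(e2-1) (h g)^(n-1) W has small degree.
   P and Q have the same degree and leading coefficient, so R = P - Q has smaller degree,
   and in characteristic 0 the Wronskian P R' - P' R = P' Q - P Q' has degree exactly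
   deg P + deg R - 1.  Comparing the two degrees bounds deg R by m. *)

Lemma eqr_nat_pchar0 (R : idomainType) :
  has_pchar0 R -> forall m n : nat, (m%:R == n%:R :> R) = (m == n).
Proof.
move=> /(pcharf0P R) R0 m n; wlog le_mn : m n / (m <= n)%N => [wlog_mn|].
  by case: (leqP m n) => [|/ltnW] /wlog_mn //; rewrite eq_sym [(n == m)]eq_sym.
by rewrite eq_sym -subr_eq0 -natrB // R0 subn_eq0 eqn_leq le_mn.
Qed.

Section Wronskian.
Variable R : comNzRingType.
Implicit Types (p q h g : {poly R}) (A B mu la : R).

Definition wronskian p q : {poly R} := p * q^`() - p^`() * q.

Lemma wronskianBr p q : wronskian p (p - q) = wronskian q p.
Proof. by rewrite /wronskian derivB; ring. Qed.

Lemma coef_Xderiv p i : ('X * p^`())`_i = i%:R * p`_i.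
Proof.
by rewrite coefXM; case: i => [|i]; rewrite ?mul0r // coef_deriv mulr_natl.
Qed.

Lemma coefM_size p q i j :
  (size p <= i.+1)%N -> (size q <= j.+1)%N -> (p * q)`_(i + j) = p`_i * q`_j.
Proof.
move=> sp sq; have lt_i : (i < (i + j).+1)%N by rewrite ltnS leq_addr.
rewrite coefM (bigD1 (Ordinal lt_i)) //= addKn big1 ?addr0 // => -[k lt_k] /= ne_ki.
have {}ne_ki : k != i by apply: contraNneq ne_ki => eq_ki; apply/eqP/val_inj.
case: (ltngtP k i) ne_ki => // [lt_ki|lt_ik] _.
- by rewrite [q`_ _]nth_default ?mulr0 //; apply: leq_trans sq _; lia.
- by rewrite [p`_k]nth_default ?mul0r //; apply: leq_trans sp _.
Qed.

(* The Jacobi equation with parameters (A, B) in the variable u = (x - 1)/2. *)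
Definition hypergeom_ode A B mu p : Prop :=
  'X * ('X + 1) * p^`()^`() + ((A + 1)%:P + (A + B + 2)%:P * 'X) * p^`() = mu%:P * p.

(* u (u + 1) h g times the logarithmic derivative of u^A (u + 1)^B h / g. *)
Definition mod_wronskian A B h g : {poly R} :=
  (A%:P * ('X + 1) + B%:P * 'X) * h * g + 'X * ('X + 1) * wronskian g h.

Lemma deriv_mod_wronskian A B mu la h g :
  hypergeom_ode A B mu h -> hypergeom_ode (- A) (- B) la g -> A + B + mu = la ->
  (mod_wronskian A B h g)^`() = 0.
Proof.
rewrite /hypergeom_ode => ode_h ode_g mu_la.
have -> : (mod_wronskian A B h g)^`() =
  g * ('X * ('X + 1) * h^`()^`() + ((A + 1)%:P + (A + B + 2)%:P * 'X) * h^`() - mu%:P * h)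
  - h * ('X * ('X + 1) * g^`()^`() + ((- A + 1)%:P + (- A + - B + 2)%:P * 'X) * g^`()
         - la%:P * g)
  + (A + B + mu - la)%:P * h * g.
  rewrite /mod_wronskian /wronskian !derivE !(rmorphD, rmorphN, rmorphB) /= polyC1.
  by move: (h^`()) (h^`()^`()) (g^`()) (g^`()^`()) => h1 h2 g1 g2; ring.
by rewrite ode_h ode_g -mu_la !subrr !mulr0 subrr mul0r mul0r addr0.
Qed.

Definition bipower (e1 e2 : nat) : {poly R} := 'X^e1 * ('X + 1) ^+ e2.

Lemma bipower_monic e1 e2 : bipower e1 e2 \is monic.
Proof. by rewrite /bipower monicMl ?monicXn // monic_exp // -polyC1 monicXaddC. Qed.

Lemma size_bipower e1 e2 : size (bipower e1 e2) = (e1 + e2).+1.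
Proof.
rewrite /bipower; have -> : 'X + 1 = 'X - (- 1)%:P :> {poly R}.
  by rewrite polyCN opprK polyC1.
rewrite size_monicM ?monicXn ?monic_neq0 ?monic_exp ?monicXsubC //.
by rewrite size_polyXn size_exp_XsubC addSn addnS.
Qed.

Lemma wronskian_bipower n e1 e2 A B h g :
  n.+1%:R * A = e1.+1%:R -> n.+1%:R * B = e2.+1%:R ->
  wronskian (g ^+ n.+1) (bipower e1.+1 e2.+1 * h ^+ n.+1)
  = bipower e1 e2 * (h * g) ^+ n * (n.+1%:R *: mod_wronskian A B h g).
Proof.
move=> nA nB; rewrite /bipower /mod_wronskian /wronskian -mul_polyC.
have -> : n.+1%:R%:P * ((A%:P * ('X + 1) + B%:P * 'X) * h * g
            + 'X * ('X + 1) * (g * h^`() - g^`() * h))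
  = (e1.+1%:R%:P * ('X + 1) + e2.+1%:R%:P * 'X) * h * g
    + n.+1%:R%:P * ('X * ('X + 1) * (g * h^`() - g^`() * h)).
  by rewrite -nA -nB !polyCM; ring.
rewrite !polyC_natr !derivM !deriv_exp !derivE /= !exprS exprMn.
by move: (h^`()) (g^`()) => h1 g1; ring.
Qed.

End Wronskian.

Arguments bipower {R}.

Section CharZeroDomain.
Variable R : idomainType.
Hypothesis R_char0 : has_pchar0 R.
Implicit Types (p q h g W : {poly R}).

Lemma size_deriv_eq0 p : p^`() = 0 -> (size p <= 1)%N.
Proof.
move=> dp0; apply/leq_sizeP => -[|j] // _; apply/eqP.
have /eqP := congr1 (coefp j) dp0.
by rewrite /= coef_deriv coef0 -mulr_natr mulf_eq0 ((pcharf0P R).1 R_char0) orbF.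
Qed.

Lemma size_wronskian_geq p q : p != 0 -> q != 0 -> size p != size q ->
  ((size p + size q).-2 <= size (wronskian p q))%N.
Proof.
move=> p0 q0 ne_pq; set a := (size p).-1; set b := (size q).-1.
have sp : size p = a.+1 by rewrite polySpred.
have sq : size q = b.+1 by rewrite polySpred.
have size_Xderiv (r : {poly R}) : r != 0 -> (size ('X * r^`())%R <= size r)%N.
  move=> r0; apply: leq_trans (size_polyMleq _ _) _.
  by rewrite size_polyX; have := lt_size_deriv r0.
have top : ('X * wronskian p q)`_(a + b) = lead_coef p * lead_coef q * (b%:R - a%:R).
  have -> : 'X * wronskian p q = p * ('X * q^`()) - ('X * p^`()) * q.
    by rewrite /wronskian; ring.
  rewrite coefB !coefM_size -?sp -?sq ?size_Xderiv // !coef_Xderiv !lead_coefE.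
  by rewrite -/a -/b; ring.
have nz : ('X * wronskian p q)`_(a + b) != 0.
  rewrite top !mulf_neq0 ?lead_coef_eq0 // subr_eq0 eqr_nat_pchar0 //.
  by apply: contra ne_pq => /eqP ba; rewrite sp sq ba.
have : (a + b < size ('X * wronskian p q)%R)%N.
  by rewrite ltnNge; apply: contra nz => /leq_sizeP->.
move=> /leq_trans/(_ (size_polyMleq _ _)); rewrite size_polyX sp sq; lia.
Qed.

Lemma size_sub_wronskian p q :
  size p = size q -> lead_coef p = lead_coef q -> p != q ->
  ((size p + size (p - q)%R).-2 <= size (wronskian q p))%N.
Proof.
move=> spq lpq ne_pq; have pq0 : p - q != 0 by rewrite subr_eq0.
have p0 : p != 0.
  apply: contraNneq ne_pq => p0; move/eqP: spq.
  by rewrite p0 size_poly0 eq_sym size_poly_eq0 => /eqP->.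
have lt_pq : (size (p - q)%R < size p)%N.
  have le_pq : (size (p - q)%R <= size p)%N.
    by rewrite (leq_trans (size_polyD _ _)) // size_polyN -spq maxnn.
  rewrite ltn_neqAle le_pq andbT; apply: contra pq0 => /eqP eq_pq.
  by rewrite -lead_coef_eq0 lead_coefE eq_pq coefB -(lead_coefE p) spq -(lead_coefE q) lpq subrr.
by rewrite -wronskianBr; apply: size_wronskian_geq; rewrite ?gtn_eqF.
Qed.

Lemma size_bipower_sub (e1 e2 n : nat) h g W :
  h != 0 -> g != 0 -> lead_coef h = lead_coef g ->
  (e1.+1 + e2.+1 + (size h).-1 * n.+1 = (size g).-1 * n.+1)%N ->
  (size W <= 1)%N ->
  wronskian (g ^+ n.+1) (bipower e1.+1 e2.+1 * h ^+ n.+1)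
    = bipower e1 e2 * (h * g) ^+ n * W ->
  (size (bipower e1.+1 e2.+1 * h ^+ n.+1 - g ^+ n.+1)%R
     <= (size g).-1 * n - (size h).-1)%N.
Proof.
move=> h0 g0 lhg deg sW wPQ.
have size_pow p k : p != 0 -> size (p ^+ k) = ((size p).-1 * k).+1.
  by move=> p0; rewrite -size_exp prednK // size_poly_gt0 expf_neq0.
have sh : (0 < size h)%N by rewrite size_poly_gt0.
have sg : (0 < size g)%N by rewrite size_poly_gt0.
set P := bipower _ _ * _; set Q := g ^+ n.+1.
have sP : size P = ((size g).-1 * n.+1).+1.
  by rewrite size_monicM ?bipower_monic ?expf_neq0 // size_bipower size_pow //; lia.
have sQ : size Q = ((size g).-1 * n.+1).+1 by rewrite size_pow.
have lPQ : lead_coef P = lead_coef Q.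
  by rewrite lead_coef_monicM ?bipower_monic // !lead_coef_exp lhg.
have [->|nePQ] := eqVneq P Q; first by rewrite subrr size_poly0.
have := size_sub_wronskian (etrans sP (esym sQ)) lPQ nePQ; rewrite wPQ.
have : (size (bipower e1 e2 * (h * g) ^+ n * W)%R
         <= (e1 + e2 + ((size h).-1 + (size g).-1) * n).+1)%N.
  rewrite (size1_polyC sW) mulrC mul_polyC (leq_trans (size_scale_leq _ _)) //.
  rewrite size_monicM ?bipower_monic ?expf_neq0 ?mulf_neq0 // size_bipower.
  rewrite size_pow ?mulf_neq0 // size_mul //.
  have -> : (size h + size g).-2 = ((size h).-1 + (size g).-1)%N by lia.
  by move: (_ * n)%N => c; lia.
move=> bound /leq_trans/(_ bound); rewrite sP; move: deg; rewrite !mulnS mulnDl.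
(* generalizing [size (P - Q)] also identifies its two elaborated ring instances *)
move: (size (P - Q)%R) ((size h).-1 * n)%N ((size g).-1 * n)%N => sPQ hn gn; lia.
Qed.

End CharZeroDomain.

Section CharZeroField.
Variable R : fieldType.
Hypothesis R_char0 : has_pchar0 R.

Let natr_neq0 n : (0 < n)%N -> n%:R != 0 :> R.
Proof. by rewrite ((pcharf0P R).1 R_char0) -lt0n. Qed.

Lemma gbinom0 (y : R) : gbinom y 0 = 1.
Proof. by rewrite /gbinom big_ord0 fact0 divr1. Qed.

Lemma mul_gbinom_diag (y : R) j :
  j.+1%:R * gbinom (y + 1) j.+1 = (y + 1) * gbinom y j.
Proof.
rewrite /gbinom big_ord_recl /= factS natrM subr0.
under eq_bigr => i _ do rewrite /bump /= add1n -natr1 opprD addrACA subrr addr0.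
have := natr_neq0 (fact_gt0 j); have := natr_neq0 (ltn0Sn j).
by rewrite -natr1 addrC => nz1 nz2; field; rewrite nz1 nz2.
Qed.

Lemma mul_gbinom_left (z : R) m :
  m.+1%:R * gbinom z m.+1 = (z - m%:R) * gbinom z m.
Proof.
rewrite /gbinom big_ord_recr /= factS natrM.
have := natr_neq0 (fact_gt0 m); have := natr_neq0 (ltn0Sn m).
by rewrite -natr1 addrC => nz1 nz2; field; rewrite nz1 nz2.
Qed.

Lemma gbinom_nat x j : gbinom (x%:R : R) j = 'C(x, j)%:R.
Proof.
elim: j => [|j IHj]; first by rewrite gbinom0 bin0.
apply: (mulfI (natr_neq0 (ltn0Sn j))).
rewrite mul_gbinom_left IHj -natrM mul_bin_left natrM.
by case: (leqP j x) => [le_jx|lt_xj]; [rewrite natrB | rewrite bin_small // !mulr0].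
Qed.

Definition jacobiU (N : nat) (al be : R) : {poly R} :=
  \poly_(j < N.+1) (gbinom (N%:R + al + be + j%:R) j * gbinom (N%:R + al) (N - j)).

Lemma jacobiE N al be : jacobi N al be = jacobiU N al be \Po xm1half R.
Proof.
rewrite /jacobi /jacobiU poly_def raddf_sum; apply: eq_bigr => j _.
by rewrite /= comp_polyZ comp_Xn_poly.
Qed.

Lemma size_jacobiU N al be :
  gbinom (N%:R + al + be + N%:R) N != 0 -> size (jacobiU N al be) = N.+1.
Proof. by move=> top; rewrite size_poly_eq // subnn gbinom0 mulr1. Qed.

Lemma lead_coef_jacobiU N al be :
  gbinom (N%:R + al + be + N%:R) N != 0 ->
  lead_coef (jacobiU N al be) = gbinom (N%:R + al + be + N%:R) N.
Proof.
by move=> top; rewrite lead_coefE size_jacobiU // coef_poly ltnSn subnn gbinom0 mulr1.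
Qed.

Lemma coef_jacobiU_rec N al be i :
  i.+1%:R * (i.+1%:R + al) * (jacobiU N al be)`_i.+1
  = (N%:R - i%:R) * (N%:R + al + be + i.+1%:R) * (jacobiU N al be)`_i.
Proof.
rewrite !coef_poly !ltnS; have [le_Ni|lt_iN] := leqP N i.
  rewrite mulr0; case: leqP => [le_iN|_]; last by rewrite !mulr0.
  have -> : i = N by apply/anti_leq; rewrite le_iN le_Ni.
  by rewrite subrr !mul0r.
rewrite ltnW //.
set y := N%:R + al + be + i%:R; set z := N%:R + al; set m := (N - i.+1)%N.
have -> : N%:R + al + be + i.+1%:R = y + 1 by rewrite /y -natr1; ring.
have Nim : (N - i)%N = m.+1 by rewrite /m; lia.
have Nim_R : N%:R - i%:R = m.+1%:R :> R by rewrite -Nim natrB // ltnW.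
have zm : z - m%:R = i.+1%:R + al by rewrite /z /m natrB //; ring.
rewrite Nim Nim_R.
transitivity ((i.+1%:R + al) * gbinom z m * (i.+1%:R * gbinom (y + 1) i.+1)); first ring.
by rewrite mul_gbinom_diag -zm -mul_gbinom_left; ring.
Qed.

Lemma jacobiU_ode N al be :
  hypergeom_ode al be (N%:R * (N%:R + al + be + 1)) (jacobiU N al be).
Proof.
rewrite /hypergeom_ode; set p := jacobiU N al be.
have -> : 'X * ('X + 1) * p^`()^`()
    = 'X * ('X * p^`())^`() - 'X * p^`() + ('X * p^`())^`() - p^`().
  by rewrite derivM derivX; ring.
rewrite mulrDl -mulrA; apply/polyP => i.
rewrite !(coefD, coefB, coefN, coefCM, coef_Xderiv, coef_deriv).
have := coef_jacobiU_rec N al be i; rewrite -/p.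
move: p`_i.+1 p`_i => c1 c0 rec.
transitivity (i.+1%:R * (i.+1%:R + al) * c1
   + (i%:R * i%:R - i%:R + (al + be + 2) * i%:R) * c0); first ring.
by rewrite rec; ring.
Qed.

Lemma xp1halfE : xp1half R = ('X + 1) \Po xm1half R.
Proof.
rewrite comp_polyD comp_polyX -polyC1 comp_polyC; apply/polyP => -[|[|i]];
  by rewrite !(coefD, coefZ, coefB, coefN, coefX, coefC, coef1) /=; field; rewrite natr_neq0.
Qed.

Lemma size_xm1half : size (xm1half R) = 2.
Proof.
by rewrite size_scale ?invr_eq0 ?natr_neq0 // -polyC1 size_XsubC.
Qed.

Section JacobiPair.
Variables (al be : R) (d j : nat).
Hypothesis al_be : al + be = d.+1%:R.

Let M := (d.+1 + j + j)%N.
Let h := jacobiU j al be.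
Let g := jacobiU (d.+1 + j) (- al) (- be).

Let top_h : gbinom (j%:R + al + be + j%:R) j = 'C(M, j)%:R.
Proof. by rewrite -(addrA _ al) al_be -!natrD gbinom_nat /M [(j + _)%N]addnC. Qed.

Let top_g : gbinom ((d.+1 + j)%:R + - al + - be + (d.+1 + j)%:R) (d.+1 + j) = 'C(M, j)%:R.
Proof.
rewrite -(addrA _ (- al)) -opprD al_be.
have -> : (d.+1 + j)%:R - d.+1%:R + (d.+1 + j)%:R = M%:R :> R.
  by rewrite /M !natrD; ring.
rewrite gbinom_nat -bin_sub /M ?leq_addr //.
by rewrite addKn.
Qed.

Let binM_neq0 : 'C(M, j)%:R != 0 :> R.
Proof. by rewrite natr_neq0 // bin_gt0 leq_addl. Qed.

Lemma size_jacobiU_low : size h = j.+1.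
Proof. by rewrite size_jacobiU ?top_h. Qed.

Lemma size_jacobiU_high : size g = (d.+1 + j).+1.
Proof. by rewrite size_jacobiU ?top_g. Qed.

Lemma lead_coef_jacobiU_pair : lead_coef h = lead_coef g.
Proof. by rewrite !lead_coef_jacobiU ?top_h ?top_g. Qed.

Lemma size_mod_wronskian_jacobiU : (size (mod_wronskian al be h g) <= 1)%N.
Proof.
apply/size_deriv_eq0/(deriv_mod_wronskian (jacobiU_ode _ _ _) (jacobiU_ode _ _ _)) => //.
have -> : be = d.+1%:R - al by rewrite -al_be addrC addKr.
by rewrite !natrD; ring.
Qed.

End JacobiPair.

End CharZeroField.

Theorem mainTheorem4 (R : numFieldType) (s t k l r : nat) :
  (0 < s)%N -> (0 < t)%N -> (0 < r)%N ->
  let a : R := (l * (s + t) + t)%:R / (s + t)%:R in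
  let b : R := (k * (s + t) + s)%:R / (s + t)%:R in
  let P : {poly R} :=
    xm1half R ^+ (l * (s + t) + t) * xp1half R ^+ (k * (s + t) + s)
      * jacobi (r.-1) a b ^+ (s + t) in
  let Q : {poly R} := jacobi (k + l + r) (- a) (- b) ^+ (s + t) in
  let m : nat := ((k + l + r) * (s + t - 1) - r)%N in
  (size (P - Q)%R <= m.+1)%N.
Proof.
move=> s_gt0 t_gt0 r_gt0; cbv zeta; have R_char0 := @pchar_num R.
set a : R := _ / _; set b : R := _ / _; set n := (s + t).-1.
set e1 := (l * (s + t) + t).-1; set e2 := (k * (s + t) + s).-1.
have st_n : (s + t)%N = n.+1 by rewrite /n; lia.
have l_e1 : (l * (s + t) + t)%N = e1.+1 by rewrite /e1; lia.
have k_e2 : (k * (s + t) + s)%N = e2.+1 by rewrite /e2; lia.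
have n0 : n.+1%:R != 0 :> R by rewrite pnatr_eq0.
have n_a : n.+1%:R * a = e1.+1%:R by rewrite mulrC -st_n -l_e1 divfK ?st_n.
have n_b : n.+1%:R * b = e2.+1%:R by rewrite mulrC -st_n -k_e2 divfK ?st_n.
have a_b : a + b = (k + l).+1%:R.
  apply: (mulfI n0); rewrite mulrDr n_a n_b -!natrD -natrM; congr _%:R.
  by move: l_e1 k_e2; rewrite st_n; nia.
rewrite (_ : (k + l + r = (k + l).+1 + r.-1)%N); last by lia.
set h := jacobiU r.-1 a b; set g := jacobiU ((k + l).+1 + r.-1) (- a) (- b).
rewrite [(_ - _)%R](_ : _ = (bipower e1.+1 e2.+1 * h ^+ n.+1 - g ^+ n.+1) \Po xm1half R).
  rewrite size_comp_poly2 ?size_xm1half //.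
  have size_h := size_jacobiU_low R_char0 r.-1 a_b.
  have size_g := size_jacobiU_high R_char0 r.-1 a_b.
  apply: leq_trans (size_bipower_sub R_char0 _ _ (lead_coef_jacobiU_pair R_char0 r.-1 a_b)
    _ _ (wronskian_bipower h g n_a n_b)) _.
  - by rewrite -size_poly_gt0 size_h.
  - by rewrite -size_poly_gt0 size_g.
  - by rewrite size_h size_g -l_e1 -k_e2 -st_n; nia.
  - exact: leq_trans (size_scale_leq _ _) (size_mod_wronskian_jacobiU R_char0 r.-1 a_b).
  rewrite size_h size_g (_ : (s + t - 1 = n)%N) /=; last by lia.
  by move: (_ * n)%N => Nn; lia.
rewrite !jacobiE (xp1halfE R_char0) -l_e1 -k_e2 -st_n.
by rewrite rmorphB /= !rmorphM /= !rmorphXn /= comp_polyX.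
Qed.
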